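(* Let $H$ be a CAT($-1$) space and let $\gamma_1,\gamma_2:[0,\infty)\to H$ be unit speed geodesic rays with $\gamma_1(\infty)=\gamma_2(\infty)=\zeta\in\partial H$. Set $d=d(\gamma_1(0),\gamma_2(0))$ and $\rho=\rho_\zeta(\gamma_1(0),\gamma_2(0))$. Then for all $s,t\geq 0$, $$d(\gamma_1(s),\gamma_2(t))\leq\cosh^{-1}\left(\frac{\cosh(d)-\cosh(\rho)}{e^{t+s}}+\cosh(\rho+s-t)\right).$$ Moreover, if $\rho=0$ and $d>0$, then for all $t\geq0$, $$d(\gamma_1(t),\gamma_2(t))\leq 2\sinh^{-1}\left(\sinh(d/2)e^{-t}\right)\leq\begin{cases} d-\frac{2}{d}\left(e^{-d}+d-1\right)t & 0\leq t\leq\frac d2,\\ 2\sinh\left(\frac d2\right)e^{-t} & t>\frac d2.\end{cases}$$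
   Context: $\partial H$ is the geodesic boundary of $H$. The Busemann function is $\rho_\zeta(p,q)=\lim_{z\to\zeta}(d(q,z)-d(p,z))$. *)

From Stdlib Require Import Reals Lra.
Open Scope R_scope.

(* inverse hyperbolic cosine (on [1, +oo)) *)
Definition arccosh (x : R) : R := ln (x + sqrt (x ^ 2 - 1)).

Definition is_metric {X : Type} (d : X -> X -> R) : Prop :=
  (forall x y, 0 <= d x y) /\
  (forall x y, d x y = 0 <-> x = y) /\
  (forall x y, d x y = d y x) /\
  (forall x y z, d x z <= d x y + d y z).

Definition geodesic_seg {X : Type} (d : X -> X -> R) (c : R -> X)
  (p q : X) (L : R) : Prop :=
  0 <= L /\ c 0 = p /\ c L = q /\
  forall s t, 0 <= s <= L -> 0 <= t <= L -> d (c s) (c t) = Rabs (s - t).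

Definition geodesic_space {X : Type} (d : X -> X -> R) : Prop :=
  forall p q, exists c, geodesic_seg d c p q (d p q).

(* The hyperbolic plane H^2 (curvature -1), hyperboloid model in R^3 *)
Definition H2pt := (R * R * R)%type.
Definition in_H2 (P : H2pt) : Prop :=
  let '(x0, x1, x2) := P in x0 ^ 2 - x1 ^ 2 - x2 ^ 2 = 1 /\ 0 < x0.
Definition dH2 (P Q : H2pt) : R :=
  let '(x0, x1, x2) := P in let '(y0, y1, y2) := Q in
  arccosh (x0 * y0 - x1 * y1 - x2 * y2).

(* x = c s lies on the side [p,q] (parametrised by c), and xb is its
   comparison point on the side [P,Q] of a comparison triangle in H^2 *)
Definition side_pt {X : Type} (d : X -> X -> R) (c : R -> X) (p q : X)
  (P Q : H2pt) (x : X) (xb : H2pt) : Prop :=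
  exists s, 0 <= s <= d p q /\ x = c s /\ in_H2 xb /\
            dH2 P xb = s /\ dH2 xb Q = d p q - s.

Definition CAT_m1 {X : Type} (d : X -> X -> R) : Prop :=
  is_metric d /\ geodesic_space d /\
  forall (p q r : X) (cpq cqr crp : R -> X),
    geodesic_seg d cpq p q (d p q) ->
    geodesic_seg d cqr q r (d q r) ->
    geodesic_seg d crp r p (d r p) ->
    forall P Q Rp : H2pt, in_H2 P -> in_H2 Q -> in_H2 Rp ->
    dH2 P Q = d p q -> dH2 Q Rp = d q r -> dH2 Rp P = d r p ->
    forall (x y : X) (xb yb : H2pt),
      (side_pt d cpq p q P Q x xb \/ side_pt d cqr q r Q Rp x xb \/
       side_pt d crp r p Rp P x xb) ->
      (side_pt d cpq p q P Q y yb \/ side_pt d cqr q r Q Rp y yb \/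
       side_pt d crp r p Rp P y yb) ->
      d x y <= dH2 xb yb.

Definition geodesic_ray {X : Type} (d : X -> X -> R) (g : R -> X) : Prop :=
  forall s t, 0 <= s -> 0 <= t -> d (g s) (g t) = Rabs (s - t).

(* two rays define the same point of the geodesic boundary *)
Definition asymptotic {X : Type} (d : X -> X -> R) (g1 g2 : R -> X) : Prop :=
  exists C, forall t, 0 <= t -> d (g1 t) (g2 t) <= C.

Definition lim_infty (f : R -> R) (l : R) : Prop :=
  forall eps, 0 < eps -> exists T, forall t, T <= t -> Rabs (f t - l) < eps.

(* Busemann function rho_zeta(p,q) = lim_{z -> zeta} (d(q,z) - d(p,z)),
   where zeta = g(oo), computed with z = g(t), t -> oo. *)
Definition busemann {X : Type} (d : X -> X -> R) (g : R -> X) (p q : X)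
  (rho : R) : Prop :=
  lim_infty (fun t => d q (g t) - d p (g t)) rho.

From Stdlib Require Import Reals Lra Psatz.
From Coquelicot Require Import Coquelicot.
Open Scope R_scope.

(* Fix s, t, a far point z = g1(x) of the first ray and a geodesic sigma from z
   to g2(0); let m be the point of sigma at distance t from g2(0).  CAT(-1)
   comparison for the hinges of the triangles (z, g2 0, g1 0) at z and
   (g2 0, g2 x, z) at g2(0) bounds d(g1 s, m) and d(m, g2 t) through the
   hyperbolic law of cosines.  As x -> oo, d(z, g2 0) - x tends to rho, so the
   first bound tends to the claimed one, while d(g2 x, g1 x) stays bounded, so
   the second tends to 0.  For rho = 0 and s = t the bound is
   2 arsinh(sinh(D/2) e^-t), a convex function of t, hence below its chord on
   [0, D/2]; arsinh y <= y then gives both explicit estimates. *)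

Lemma cosh_sq_sub_sinh_sq x : cosh x ^ 2 - sinh x ^ 2 = 1.
Proof. unfold cosh, sinh; rewrite exp_Ropp; field; apply Rgt_not_eq, exp_pos. Qed.

Lemma cosh_add x y : cosh (x + y) = cosh x * cosh y + sinh x * sinh y.
Proof. unfold cosh, sinh; rewrite exp_plus, Ropp_plus_distr, exp_plus; field. Qed.

Lemma cosh_opp x : cosh (- x) = cosh x.
Proof. unfold cosh; rewrite Ropp_involutive; lra. Qed.

Lemma sinh_opp x : sinh (- x) = - sinh x.
Proof. unfold sinh; rewrite Ropp_involutive; lra. Qed.

Lemma cosh_sub x y : cosh (x - y) = cosh x * cosh y - sinh x * sinh y.
Proof. unfold Rminus; rewrite cosh_add, cosh_opp, sinh_opp; ring. Qed.

Lemma cosh_double x : cosh (2 * x) = 1 + 2 * sinh x ^ 2.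
Proof.
  replace (2 * x) with (x + x) by ring.
  rewrite cosh_add; pose proof (cosh_sq_sub_sinh_sq x); nra.
Qed.

Lemma cosh_Rabs x : cosh (Rabs x) = cosh x.
Proof. unfold Rabs; destruct (Rcase_abs x); [apply cosh_opp | reflexivity]. Qed.

Lemma sinh_sub_exp a p : sinh (a - p) = exp (- p) * sinh a - sinh p * exp (- a).
Proof.
  unfold sinh, Rminus.
  rewrite exp_plus, Ropp_plus_distr, exp_plus, Ropp_involutive, !exp_Ropp.
  field; split; apply Rgt_not_eq, exp_pos.
Qed.

Lemma cosh_pos x : 0 < cosh x.
Proof. unfold cosh; pose proof (exp_pos x); pose proof (exp_pos (- x)); lra. Qed.

Lemma cosh_ge_1 x : 1 <= cosh x.
Proof. pose proof (cosh_sq_sub_sinh_sq x); pose proof (cosh_pos x); nra. Qed.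

Lemma sinh_pos x : 0 < x -> 0 < sinh x.
Proof. intros Hx; rewrite <- sinh_0; apply sinh_lt, Hx. Qed.

Lemma sinh_ge_0 x : 0 <= x -> 0 <= sinh x.
Proof. intros [Hx | <-]; [now left; apply sinh_pos | rewrite sinh_0; lra]. Qed.

Lemma exp_le_exp x y : x <= y -> exp x <= exp y.
Proof. intros [Hxy | ->]; [left; apply exp_increasing, Hxy | apply Rle_refl]. Qed.

Lemma cosh_le_Rabs x y : Rabs x <= y -> cosh x <= cosh y.
Proof.
  intros Hxy; apply Rabs_le_between in Hxy.
  replace y with ((y + x) / 2 + (y - x) / 2) by field.
  replace x with ((y + x) / 2 - (y - x) / 2) at 1 by field.
  rewrite cosh_add, cosh_sub.
  assert (0 <= sinh ((y + x) / 2) * sinh ((y - x) / 2))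
    by (apply Rmult_le_pos; apply sinh_ge_0; lra).
  lra.
Qed.

Lemma id_le_sinh x : 0 <= x -> x <= sinh x.
Proof.
  intros [Hx | <-]; [| rewrite sinh_0; lra].
  destruct (MVT_cor2 sinh cosh 0 x Hx (fun c _ => derivable_pt_lim_sinh c))
    as [c [Hc _]].
  rewrite sinh_0 in Hc; pose proof (cosh_ge_1 c); nra.
Qed.

Lemma arcsinh_le_id y : 0 <= y -> arcsinh y <= y.
Proof.
  intros Hy; rewrite <- (arcsinh_sinh y) at 2.
  apply arcsinh_le, id_le_sinh, Hy.
Qed.

Lemma arccosh_cosh x : 0 <= x -> arccosh (cosh x) = x.
Proof.
  intros Hx; unfold arccosh.
  replace (cosh x ^ 2 - 1) with (sinh x ^ 2) by (pose proof (cosh_sq_sub_sinh_sq x); lra).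
  rewrite sqrt_pow2 by (apply sinh_ge_0, Hx).
  replace (cosh x + sinh x) with (exp x) by (unfold cosh, sinh; field).
  apply ln_exp.
Qed.

Lemma arccosh_1 : arccosh 1 = 0.
Proof. rewrite <- cosh_0; apply arccosh_cosh; lra. Qed.

Lemma continuous_arccosh x : 0 < x -> continuous arccosh x.
Proof.
  intros Hx; unfold arccosh.
  apply (continuous_comp (fun y => y + sqrt (y ^ 2 - 1)) ln).
  - refine (continuous_plus (fun y => y) (fun y => sqrt (y ^ 2 - 1)) x _ _).
    + apply continuous_id.
    + apply (continuous_comp (fun y => y ^ 2 - 1) sqrt), continuous_sqrt.
      apply (ex_derive_continuous (K := R_AbsRing) (V := R_NormedModule)); auto_derive; trivial.
  - apply continuous_ln; pose proof (sqrt_pos (x ^ 2 - 1)); lra.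
Qed.

Lemma metric_dist_diff (X : Type) (d : X -> X -> R) x y z :
  is_metric d -> Rabs (d x y - d x z) <= d y z.
Proof.
  intros (_ & _ & Hsym & Htri); apply Rabs_le.
  pose proof (Htri x y z); pose proof (Htri x z y); rewrite (Hsym z y) in *; lra.
Qed.

Lemma metric_side_bounds (X : Type) (d : X -> X -> R) p q r :
  is_metric d -> Rabs (d p q - d r p) <= d q r <= d p q + d r p.
Proof.
  intros Hmet; pose proof Hmet as (_ & _ & Hsym & Htri).
  pose proof (metric_dist_diff X d p q r Hmet).
  rewrite (Hsym p r) in *; split; [assumption |].
  rewrite (Hsym r p), (Hsym p q); apply Htri.
Qed.

(* The point of the hyperboloid at distance [u] from [(1,0,0)] in the unit
   direction [(c,s)]. *)
Definition H2_polar (u c s : R) : H2pt := (cosh u, sinh u * c, sinh u * s).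

Lemma in_H2_polar u c s : c ^ 2 + s ^ 2 = 1 -> in_H2 (H2_polar u c s).
Proof. intros Hcs; split; [pose proof (cosh_sq_sub_sinh_sq u); nra | apply cosh_pos]. Qed.

Lemma H2_polar_0 c s c' s' : H2_polar 0 c s = H2_polar 0 c' s'.
Proof. unfold H2_polar; rewrite sinh_0, !Rmult_0_l; reflexivity. Qed.

Lemma dH2_polar u v c1 s1 c2 s2 :
  dH2 (H2_polar u c1 s1) (H2_polar v c2 s2)
  = arccosh (cosh u * cosh v - sinh u * sinh v * (c1 * c2 + s1 * s2)).
Proof. unfold dH2, H2_polar; f_equal; ring. Qed.

Lemma dH2_polar_same_dir u v c s :
  c ^ 2 + s ^ 2 = 1 -> dH2 (H2_polar u c s) (H2_polar v c s) = Rabs (u - v).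
Proof.
  intros Hcs; rewrite dH2_polar.
  replace (c * c + s * s) with 1 by nra.
  rewrite Rmult_1_r, <- cosh_sub, <- cosh_Rabs.
  apply arccosh_cosh, Rabs_pos.
Qed.

(* Hyperbolic law of cosines: the cosine of the angle between the sides [a] and
   [b] of a hyperbolic triangle whose third side is [e]. *)
Definition comparison_cos (a b e : R) : R :=
  (cosh a * cosh b - cosh e) / (sinh a * sinh b).

Lemma comparison_cos_bounds a b e :
  0 < a -> 0 < b -> Rabs (a - b) <= e <= a + b -> -1 <= comparison_cos a b e <= 1.
Proof.
  intros Ha Hb [Hlo Hhi].
  assert (Hab : 0 < sinh a * sinh b) by (apply Rmult_lt_0_compat; apply sinh_pos; lra).
  assert (Hk : comparison_cos a b e * (sinh a * sinh b) = cosh a * cosh b - cosh e)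
    by (unfold comparison_cos; field; split; apply Rgt_not_eq, sinh_pos; lra).
  pose proof (cosh_le_Rabs _ _ Hlo) as Hc1; rewrite cosh_sub in Hc1.
  assert (Hc2 : cosh e <= cosh (a + b)).
  { apply cosh_le_Rabs; rewrite Rabs_pos_eq; pose proof (Rabs_pos (a - b)); lra. }
  rewrite cosh_add in Hc2.
  split; nra.
Qed.

(* [arccosh (hinge_bound u v a b e)] is the distance between the points at
   distances [u] and [v] from the common vertex on the sides [a] and [b] of that
   triangle (see [hinge_bound_comparison_cos]). *)
Definition hinge_bound (u v a b e : R) : R :=
  cosh (u - v) + sinh u / sinh a * (sinh v / sinh b) * (cosh e - cosh (a - b)).

Lemma hinge_bound_comparison_cos u v a b e : sinh a <> 0 -> sinh b <> 0 ->
  cosh u * cosh v - sinh u * sinh v * comparison_cos a b e = hinge_bound u v a b e.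
Proof. intros; unfold hinge_bound, comparison_cos; rewrite !cosh_sub; field; auto. Qed.

Lemma CAT_m1_hinge (X : Type) (d : X -> X -> R) (p q r : X) (cpq crp : R -> X)
    (u v : R) :
  CAT_m1 d ->
  geodesic_seg d cpq p q (d p q) -> geodesic_seg d crp r p (d r p) ->
  0 < d p q -> 0 < d r p -> 0 <= u <= d p q -> 0 <= v <= d r p ->
  d (cpq u) (crp (d r p - v)) <= arccosh (hinge_bound u v (d p q) (d r p) (d q r)).
Proof.
  intros Hcat Hpq Hrp Ha Hb Hu Hv.
  pose proof Hcat as [Hmet [Hgeo Hcomp]].
  destruct (Hgeo q r) as [cqr Hqr].
  pose proof (metric_side_bounds X d p q r Hmet) as He.
  set (a := d p q) in *; set (b := d r p) in *; set (e := d q r) in *.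
  set (k := comparison_cos a b e).
  assert (Hk : -1 <= k <= 1) by (apply comparison_cos_bounds; auto).
  set (sk := sqrt (1 - k ^ 2)).
  assert (Hdir : k ^ 2 + sk ^ 2 = 1) by (unfold sk; rewrite pow2_sqrt; nra).
  assert (Hdir0 : 1 ^ 2 + 0 ^ 2 = 1) by ring.
  assert (Hcos : cosh a * cosh b - sinh a * sinh b * k = cosh e).
  { unfold k, comparison_cos; field; split; apply Rgt_not_eq, sinh_pos; lra. }
  assert (Hangle : forall x y, dH2 (H2_polar x 1 0) (H2_polar y k sk)
                               = arccosh (cosh x * cosh y - sinh x * sinh y * k)).
  { intros x y; rewrite dH2_polar; f_equal; ring. }
  refine (Rle_trans _ _ _
            (Hcomp p q r cpq cqr crp Hpq Hqr Hrp
               (H2_polar 0 1 0) (H2_polar a 1 0) (H2_polar b k sk)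
               (in_H2_polar _ _ _ Hdir0) (in_H2_polar _ _ _ Hdir0) (in_H2_polar _ _ _ Hdir)
               _ _ _ (cpq u) (crp (b - v)) (H2_polar u 1 0) (H2_polar v k sk) _ _) _);
    fold a b e.
  - rewrite (dH2_polar_same_dir _ _ _ _ Hdir0), Rabs_minus_sym, Rabs_pos_eq; lra.
  - rewrite Hangle, Hcos; apply arccosh_cosh; pose proof (Rabs_pos (a - b)); lra.
  - rewrite (H2_polar_0 1 0 k sk), (dH2_polar_same_dir _ _ _ _ Hdir), Rminus_0_r, Rabs_pos_eq; lra.
  - left; exists u; fold a; refine (conj _ (conj eq_refl (conj (in_H2_polar _ _ _ Hdir0) (conj _ _))));
      [lra | |].
    + rewrite (dH2_polar_same_dir _ _ _ _ Hdir0), Rabs_minus_sym, Rabs_pos_eq; lra.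
    + rewrite (dH2_polar_same_dir _ _ _ _ Hdir0), Rabs_minus_sym, Rabs_pos_eq; lra.
  - right; right; exists (b - v); fold b;
      refine (conj _ (conj eq_refl (conj (in_H2_polar _ _ _ Hdir) (conj _ _)))); [lra | |].
    + rewrite (dH2_polar_same_dir _ _ _ _ Hdir), Rabs_pos_eq; lra.
    + rewrite (H2_polar_0 1 0 k sk), (dH2_polar_same_dir _ _ _ _ Hdir), Rminus_0_r,
        Rabs_pos_eq; lra.
  - rewrite Hangle; unfold k; rewrite hinge_bound_comparison_cos by (apply Rgt_not_eq, sinh_pos; lra).
    apply Rle_refl.
Qed.

Lemma lim_infty_seq (f : R -> R) (l : R) :
  lim_infty f l -> is_lim_seq (fun n => f (INR n)) l.
Proof.
  intros Hf; apply is_lim_seq_spec; intros eps.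
  destruct (Hf eps (cond_pos eps)) as [T HT].
  destruct (proj2 (is_lim_seq_spec INR p_infty) is_lim_seq_INR T) as [N HN].
  exists N; intros n Hn; apply HT; left; apply HN, Hn.
Qed.

Lemma is_lim_seq_arccosh (u : nat -> R) (l : R) :
  0 < l -> is_lim_seq u l -> is_lim_seq (fun n => arccosh (u n)) (arccosh l).
Proof. intros Hl; apply is_lim_seq_continuous, continuity_pt_filterlim, continuous_arccosh, Hl. Qed.

Lemma is_lim_seq_p_infty_gt (a : nat -> R) (M : R) :
  is_lim_seq a p_infty -> eventually (fun n => M < a n).
Proof. intros Ha; apply (proj2 (is_lim_seq_spec a p_infty) Ha M). Qed.

Lemma is_lim_seq_exp_opp (a : nat -> R) :
  is_lim_seq a p_infty -> is_lim_seq (fun n => exp (- a n)) 0.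
Proof.
  intros Ha.
  apply (filterlim_comp _ _ _ (fun n => - a n) exp _ (Rbar_locally m_infty)).
  - exact (proj1 (is_lim_seq_opp a p_infty) Ha).
  - exact is_lim_exp_m.
Qed.

Lemma is_lim_seq_div_sinh (a : nat -> R) (c : R) :
  is_lim_seq a p_infty -> is_lim_seq (fun n => c / sinh (a n)) 0.
Proof.
  intros Ha.
  assert (Hsinh : is_lim_seq (fun n => sinh (a n)) p_infty).
  { apply (is_lim_seq_le_p_loc a); [| exact Ha].
    destruct (is_lim_seq_p_infty_gt a 0 Ha) as [N HN].
    exists N; intros n Hn; apply id_le_sinh; left; apply HN, Hn. }
  replace (Finite 0) with (Rbar_mult c (Rbar_inv p_infty)) by (simpl; f_equal; ring).
  apply is_lim_seq_scal_l, is_lim_seq_inv; [exact Hsinh | discriminate].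
Qed.

Lemma is_lim_seq_sinh_sub_div (a : nat -> R) (p : R) :
  is_lim_seq a p_infty -> is_lim_seq (fun n => sinh (a n - p) / sinh (a n)) (exp (- p)).
Proof.
  intros Ha.
  apply is_lim_seq_ext_loc with (fun n => exp (- p) - sinh p / sinh (a n) * exp (- a n)).
  - destruct (is_lim_seq_p_infty_gt a 0 Ha) as [N HN]; exists N; intros n Hn.
    rewrite sinh_sub_exp; field; apply Rgt_not_eq, sinh_pos, HN, Hn.
  - replace (Finite (exp (- p))) with (Finite (exp (- p) - 0 * 0)) by (f_equal; ring).
    apply is_lim_seq_minus'; [apply is_lim_seq_const |].
    apply is_lim_seq_mult'; [apply is_lim_seq_div_sinh | apply is_lim_seq_exp_opp]; exact Ha.
Qed.

Lemma is_lim_seq_mult_0_bounded (x w : nat -> R) (M : R) :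
  is_lim_seq x 0 -> (forall n, Rabs (w n) <= M) -> is_lim_seq (fun n => x n * w n) 0.
Proof.
  intros Hx Hw; apply is_lim_seq_abs_0.
  apply is_lim_seq_le_le with (fun _ => 0) (fun n => Rabs (x n) * M).
  - intros n; rewrite Rabs_mult; split; [apply Rmult_le_pos; apply Rabs_pos |].
    apply Rmult_le_compat_l; [apply Rabs_pos | apply Hw].
  - apply is_lim_seq_const.
  - replace (Finite 0) with (Rbar_mult 0 M) by (simpl; f_equal; ring).
    apply is_lim_seq_scal_r, (is_lim_seq_abs_0 x), Hx.
Qed.

Lemma is_lim_seq_cosh (u : nat -> R) (l : R) :
  is_lim_seq u l -> is_lim_seq (fun n => cosh (u n)) (cosh l).
Proof. apply is_lim_seq_continuous, derivable_continuous_pt, derivable_pt_cosh. Qed.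

Lemma is_lim_seq_hinge_bound_far (a b : nat -> R) (rho p q c : R) :
  is_lim_seq a p_infty -> is_lim_seq b p_infty -> is_lim_seq (fun n => a n - b n) rho ->
  is_lim_seq (fun n => hinge_bound (a n - p) (b n - q) (a n) (b n) c)
    (cosh (rho - p + q) + exp (- p) * exp (- q) * (cosh c - cosh rho)).
Proof.
  intros Ha Hb Hab.
  apply is_lim_seq_ext with
    (fun n => cosh (a n - b n - p + q) + sinh (a n - p) / sinh (a n)
              * (sinh (b n - q) / sinh (b n)) * (cosh c - cosh (a n - b n))).
  { intros n; unfold hinge_bound; do 2 f_equal; ring. }
  apply is_lim_seq_plus'.
  - apply is_lim_seq_cosh, is_lim_seq_plus', is_lim_seq_const.
    apply is_lim_seq_minus'; [exact Hab | apply is_lim_seq_const].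
  - apply is_lim_seq_mult'; [apply is_lim_seq_mult'; apply is_lim_seq_sinh_sub_div; assumption |].
    apply is_lim_seq_minus'; [apply is_lim_seq_const | apply is_lim_seq_cosh, Hab].
Qed.

Lemma is_lim_seq_hinge_bound_near (a b e : nat -> R) (u v C : R) :
  is_lim_seq a p_infty -> is_lim_seq b p_infty ->
  (forall n, Rabs (a n - b n) <= e n <= C) ->
  is_lim_seq (fun n => hinge_bound u v (a n) (b n) (e n)) (cosh (u - v)).
Proof.
  intros Ha Hb He.
  replace (Finite (cosh (u - v))) with (Finite (cosh (u - v) + 0)) by (f_equal; ring).
  apply is_lim_seq_plus'; [apply is_lim_seq_const |].
  apply is_lim_seq_mult_0_bounded with (cosh C).
  - replace (Finite 0) with (Finite (0 * 0)) by (f_equal; ring).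
    apply is_lim_seq_mult'; apply is_lim_seq_div_sinh; assumption.
  - intros n; destruct (He n) as [Hab HeC].
    pose proof (cosh_le_Rabs _ _ Hab); pose proof (cosh_ge_1 (a n - b n)).
    assert (cosh (e n) <= cosh C)
      by (apply cosh_le_Rabs; rewrite Rabs_pos_eq; pose proof (Rabs_pos (a n - b n)); lra).
    apply Rabs_le; pose proof (cosh_ge_1 C); lra.
Qed.

Lemma busemann_Rabs_le (X : Type) (d : X -> X -> R) (g : R -> X) (p q : X) (rho : R) :
  is_metric d -> busemann d g p q rho -> Rabs rho <= d p q.
Proof.
  intros Hmet Hbus; apply Rle_plus_epsilon; intros eps Heps.
  destruct (Hbus eps Heps) as [T HT]; specialize (HT T (Rle_refl T)).
  pose proof (metric_dist_diff X d (g T) q p Hmet) as Hdiff.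
  pose proof Hmet as (_ & _ & Hsym & _).
  rewrite (Hsym (g T) q), (Hsym (g T) p), (Hsym q p) in Hdiff.
  apply Rabs_def2 in HT; apply Rabs_le_between in Hdiff; apply Rabs_le; lra.
Qed.

Section AsymptoticRays.

Variables (X : Type) (d : X -> X -> R) (g1 g2 : R -> X).
Hypotheses (Hcat : CAT_m1 d) (ray1 : geodesic_ray d g1) (ray2 : geodesic_ray d g2).

Lemma geodesic_ray_dist_0 (g : R -> X) (x : R) :
  geodesic_ray d g -> 0 <= x -> d (g 0) (g x) = x.
Proof. intros Hg Hx; rewrite Hg, Rabs_minus_sym, Rabs_pos_eq; lra. Qed.

Lemma geodesic_ray_seg (g : R -> X) (x : R) :
  geodesic_ray d g -> 0 <= x -> geodesic_seg d g (g 0) (g x) (d (g 0) (g x)).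
Proof.
  intros Hg Hx; rewrite geodesic_ray_dist_0 by assumption.
  repeat split; [exact Hx | intros; apply Hg; lra].
Qed.

Lemma dist_ray1_sub_Rabs_le (x : R) :
  0 <= x -> Rabs (d (g1 x) (g2 0) - x) <= d (g1 0) (g2 0).
Proof.
  intros Hx; pose proof Hcat as [Hmet _]; pose proof Hmet as (_ & _ & Hsym & _).
  pose proof (metric_dist_diff X d (g1 x) (g2 0) (g1 0) Hmet) as Hdiff.
  rewrite (Hsym (g1 x) (g1 0)), geodesic_ray_dist_0, (Hsym (g2 0)) in Hdiff by assumption.
  exact Hdiff.
Qed.

Lemma dist_ray2_sub_Rabs_le (x : R) :
  0 <= x -> Rabs (x - d (g1 x) (g2 0)) <= d (g1 x) (g2 x).
Proof.
  intros Hx; pose proof Hcat as [Hmet _]; pose proof Hmet as (_ & _ & Hsym & _).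
  pose proof (metric_dist_diff X d (g2 0) (g2 x) (g1 x) Hmet) as Hdiff.
  rewrite geodesic_ray_dist_0, (Hsym (g2 0)), (Hsym (g2 x)) in Hdiff by assumption.
  exact Hdiff.
Qed.

Lemma dist_rays_le_hinge_bounds (x s t : R) :
  0 < x -> 0 <= s <= x -> 0 <= t <= x -> t < d (g1 x) (g2 0) ->
  d (g1 s) (g2 t)
  <= arccosh (hinge_bound (d (g1 x) (g2 0) - t) (x - s) (d (g1 x) (g2 0)) x
                          (d (g1 0) (g2 0)))
     + arccosh (hinge_bound t t x (d (g1 x) (g2 0)) (d (g1 x) (g2 x))).
Proof.
  intros Hx Hs Ht HtB.
  pose proof Hcat as [(_ & _ & Hsym & Htri) [Hgeo _]].
  destruct (Hgeo (g1 x) (g2 0)) as [sigma Hsigma].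
  set (B := d (g1 x) (g2 0)) in *.
  apply (Rle_trans _ _ _ (Htri _ (sigma (B - t)) _)), Rplus_le_compat.
  - pose proof (CAT_m1_hinge X d (g1 x) (g2 0) (g1 0) sigma g1 (B - t) (x - s) Hcat
                  Hsigma (geodesic_ray_seg g1 x ray1 ltac:(lra))) as Hhinge.
    rewrite geodesic_ray_dist_0 in Hhinge by (assumption || lra); fold B in Hhinge.
    replace (x - (x - s)) with s in Hhinge by ring.
    rewrite Hsym, (Hsym (g1 0)); apply Hhinge; lra.
  - pose proof (CAT_m1_hinge X d (g2 0) (g2 x) (g1 x) g2 sigma t t Hcat
                  (geodesic_ray_seg g2 x ray2 ltac:(lra)) Hsigma) as Hhinge.
    rewrite geodesic_ray_dist_0 in Hhinge by (assumption || lra); fold B in Hhinge.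
    rewrite Hsym, (Hsym (g1 x) (g2 x)); apply Hhinge; lra.
Qed.

Lemma busemann_far_point_seq (rho : R) :
  busemann d g1 (g1 0) (g2 0) rho ->
  is_lim_seq (fun n => d (g1 (INR n)) (g2 0) - INR n) rho.
Proof.
  intros Hbus; pose proof Hcat as [(_ & _ & Hsym & _) _].
  apply is_lim_seq_ext with (2 := lim_infty_seq _ _ Hbus); intros n.
  rewrite geodesic_ray_dist_0, Hsym by (assumption || apply pos_INR); reflexivity.
Qed.

Lemma asymptotic_rays_dist_le (rho : R) :
  asymptotic d g1 g2 -> busemann d g1 (g1 0) (g2 0) rho ->
  forall s t, 0 <= s -> 0 <= t ->
  d (g1 s) (g2 t) <=
  arccosh ((cosh (d (g1 0) (g2 0)) - cosh rho) / exp (t + s) + cosh (rho + s - t)).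
Proof.
  intros [C HC] Hbus s t Hs Ht.
  pose proof Hcat as [Hmet _]; pose proof Hmet as (Hpos & _).
  set (d0 := d (g1 0) (g2 0)).
  set (B := fun n : nat => d (g1 (INR n)) (g2 0)).
  assert (HBn := busemann_far_point_seq _ Hbus : is_lim_seq (fun n => B n - INR n) rho).
  assert (HB : is_lim_seq B p_infty).
  { apply is_lim_seq_ext with (fun n => INR n + (B n - INR n)); [intros; ring |].
    eapply is_lim_seq_plus; [exact is_lim_seq_INR | exact HBn | reflexivity]. }
  set (Fv := cosh (rho - t + s) + exp (- t) * exp (- s) * (cosh d0 - cosh rho)).
  assert (HFv : 1 <= Fv).
  { pose proof (cosh_le_Rabs _ _ (busemann_Rabs_le X d g1 _ _ rho Hmet Hbus)).
    assert (0 <= exp (- t) * exp (- s) * (cosh d0 - cosh rho)).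
    { apply Rmult_le_pos; [left; apply Rmult_lt_0_compat; apply exp_pos | unfold d0; lra]. }
    pose proof (cosh_ge_1 (rho - t + s)); unfold Fv; lra. }
  assert (Hfar := is_lim_seq_arccosh _ Fv ltac:(lra)
                    (is_lim_seq_hinge_bound_far B INR rho t s d0 HB is_lim_seq_INR HBn)).
  assert (Hnear := is_lim_seq_arccosh _ _ (cosh_pos (t - t))
                     (is_lim_seq_hinge_bound_near INR B (fun n => d (g1 (INR n)) (g2 (INR n)))
                        t t C is_lim_seq_INR HB
                        (fun n => conj (dist_ray2_sub_Rabs_le _ (pos_INR n)) (HC _ (pos_INR n))))).
  rewrite Rminus_diag, cosh_0, arccosh_1 in Hnear.
  replace (arccosh ((cosh d0 - cosh rho) / exp (t + s) + cosh (rho + s - t)))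
    with (arccosh Fv + 0).
  - refine (is_lim_seq_le_loc (fun _ => d (g1 s) (g2 t)) _ _ _ _ (is_lim_seq_const _)
              (is_lim_seq_plus' _ _ _ _ Hfar Hnear)).
    destruct (is_lim_seq_p_infty_gt INR (s + t + d0) is_lim_seq_INR) as [N HN].
    exists N; intros n Hn; specialize (HN n Hn).
    pose proof (dist_ray1_sub_Rabs_le _ (pos_INR n)) as HBd0.
    apply Rabs_le_between in HBd0; pose proof (Hpos (g1 0) (g2 0)).
    apply dist_rays_le_hinge_bounds; unfold B, d0 in *; lra.
  - rewrite Rplus_0_r; unfold Fv; f_equal.
    rewrite exp_plus, !exp_Ropp; replace (rho + s - t) with (rho - t + s) by ring.
    field; split; apply Rgt_not_eq, exp_pos.
Qed.

End AsymptoticRays.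

Lemma cosh_two_arcsinh y : cosh (2 * arcsinh y) = 1 + 2 * y ^ 2.
Proof. rewrite cosh_double, sinh_arcsinh; reflexivity. Qed.

Lemma arccosh_diagonal_bound D t : 0 <= D ->
  arccosh ((cosh D - cosh 0) / exp (t + t) + cosh (0 + t - t))
  = 2 * arcsinh (sinh (D / 2) * exp (- t)).
Proof.
  intros HD.
  assert (Hy : 0 <= sinh (D / 2) * exp (- t))
    by (apply Rmult_le_pos; [apply sinh_ge_0; lra | left; apply exp_pos]).
  rewrite <- (arccosh_cosh (2 * arcsinh _))
    by (apply Rmult_le_pos; [lra | rewrite <- arcsinh_0; apply arcsinh_le, Hy]).
  f_equal; rewrite cosh_two_arcsinh.
  replace D with (2 * (D / 2)) at 1 by field.
  replace (0 + t - t) with 0 by ring.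
  rewrite cosh_double, cosh_0, exp_plus, exp_Ropp.
  field; apply Rgt_not_eq, exp_pos.
Qed.

Lemma chord_le_of_derive_nondecreasing (f f' : R -> R) (x y t : R) :
  (forall c, x <= c <= y -> derivable_pt_lim f c (f' c)) ->
  (forall c1 c2, x <= c1 <= c2 -> c2 <= y -> f' c1 <= f' c2) ->
  x <= t <= y ->
  (y - x) * f t <= (y - t) * f x + (t - x) * f y.
Proof.
  intros Hder Hmono [[Hxt | <-] [Hty | ->]]; try lra.
  destruct (MVT_cor2 f f' x t Hxt (fun c Hc => Hder c ltac:(lra))) as [c1 [E1 Hc1]].
  destruct (MVT_cor2 f f' t y Hty (fun c Hc => Hder c ltac:(lra))) as [c2 [E2 Hc2]].
  assert (f' c1 <= f' c2) by (apply Hmono; lra).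
  assert (0 <= (t - x) * (y - t)) by nra.
  nra.
Qed.

Lemma div_sqrt_sq_add_1_le y1 y2 :
  0 <= y1 <= y2 -> y1 / sqrt (y1 ^ 2 + 1) <= y2 / sqrt (y2 ^ 2 + 1).
Proof.
  intros [H1 H12].
  assert (S1 : 0 < sqrt (y1 ^ 2 + 1)) by (apply sqrt_lt_R0; nra).
  assert (S2 : 0 < sqrt (y2 ^ 2 + 1)) by (apply sqrt_lt_R0; nra).
  apply Rmult_le_reg_r with (sqrt (y1 ^ 2 + 1) * sqrt (y2 ^ 2 + 1)); [nra |].
  replace (y1 / sqrt (y1 ^ 2 + 1) * (sqrt (y1 ^ 2 + 1) * sqrt (y2 ^ 2 + 1)))
    with (sqrt (y1 ^ 2 * (y2 ^ 2 + 1)))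
    by (rewrite sqrt_mult, sqrt_pow2 by nra; field; lra).
  replace (y2 / sqrt (y2 ^ 2 + 1) * (sqrt (y1 ^ 2 + 1) * sqrt (y2 ^ 2 + 1)))
    with (sqrt (y2 ^ 2 * (y1 ^ 2 + 1)))
    by (rewrite sqrt_mult, sqrt_pow2 by nra; field; lra).
  apply sqrt_le_1; nra.
Qed.

Lemma derivable_pt_lim_two_arcsinh_exp a x :
  derivable_pt_lim (fun x => 2 * arcsinh (a * exp (- x))) x
    (- 2 * (a * exp (- x) / sqrt ((a * exp (- x)) ^ 2 + 1))).
Proof.
  apply is_derive_Reals.
  assert (Hin : is_derive (fun x => a * exp (- x)) x (- (a * exp (- x))))
    by (auto_derive; [trivial | ring]).
  assert (Hout := proj2 (is_derive_Reals _ _ _) (derivable_pt_lim_arcsinh (a * exp (- x)))).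
  replace (- 2 * (a * exp (- x) / sqrt ((a * exp (- x)) ^ 2 + 1)))
    with (2 * (- (a * exp (- x)) * / sqrt ((a * exp (- x)) ^ 2 + 1))) by (unfold Rdiv; ring).
  exact (is_derive_scal _ _ 2 _ (is_derive_comp arcsinh (fun x => a * exp (- x)) x _ _ Hout Hin)).
Qed.

Lemma two_arcsinh_exp_le_chord a x y t : 0 <= a -> x <= t <= y ->
  (y - x) * (2 * arcsinh (a * exp (- t)))
  <= (y - t) * (2 * arcsinh (a * exp (- x))) + (t - x) * (2 * arcsinh (a * exp (- y))).
Proof.
  intros Ha Ht.
  apply (chord_le_of_derive_nondecreasing (fun x => 2 * arcsinh (a * exp (- x)))
           (fun x => - 2 * (a * exp (- x) / sqrt ((a * exp (- x)) ^ 2 + 1))));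
    [intros c _; apply derivable_pt_lim_two_arcsinh_exp | | exact Ht].
  intros c1 c2 [_ Hc] _.
  assert (exp (- c2) <= exp (- c1)) by (apply exp_le_exp; lra).
  pose proof (exp_pos (- c2)).
  assert (Hy : 0 <= a * exp (- c2) <= a * exp (- c1)) by (split; nra).
  pose proof (div_sqrt_sq_add_1_le _ _ Hy); lra.
Qed.

Lemma two_arcsinh_exp_le_linear D t : 0 < D -> 0 <= t <= D / 2 ->
  2 * arcsinh (sinh (D / 2) * exp (- t)) <= D - 2 / D * (exp (- D) + D - 1) * t.
Proof.
  intros HD Ht.
  pose proof (two_arcsinh_exp_le_chord (sinh (D / 2)) 0 (D / 2) t
                (sinh_ge_0 (D / 2) ltac:(lra)) Ht) as Hchord.
  rewrite Ropp_0, exp_0, Rmult_1_r, arcsinh_sinh in Hchord.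
  assert (Hend : sinh (D / 2) * exp (- (D / 2)) = (1 - exp (- D)) / 2).
  { unfold sinh; replace (- D) with (- (D / 2) + - (D / 2)) by field.
    rewrite exp_plus, exp_Ropp; field; apply Rgt_not_eq, exp_pos. }
  rewrite Hend in Hchord.
  assert (exp (- D) <= 1) by (rewrite <- exp_0; apply exp_le_exp; lra).
  pose proof (arcsinh_le_id ((1 - exp (- D)) / 2) ltac:(lra)).
  apply Rmult_le_reg_l with (D / 2); [lra |].
  replace (D / 2 * (D - 2 / D * (exp (- D) + D - 1) * t))
    with ((D / 2 - t) * D + t * (1 - exp (- D))) by (field; lra).
  nra.
Qed.

Theorem corollaryA2 (X : Type) (d : X -> X -> R) (g1 g2 : R -> X) (rho : R) :
  CAT_m1 d ->
  geodesic_ray d g1 -> geodesic_ray d g2 ->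
  asymptotic d g1 g2 ->
  busemann d g1 (g1 0) (g2 0) rho ->
  (forall s t, 0 <= s -> 0 <= t ->
     d (g1 s) (g2 t) <=
     arccosh ((cosh (d (g1 0) (g2 0)) - cosh rho) / exp (t + s)
              + cosh (rho + s - t))) /\
  (rho = 0 -> 0 < d (g1 0) (g2 0) ->
   forall t, 0 <= t ->
     let D := d (g1 0) (g2 0) in
     d (g1 t) (g2 t) <= 2 * arcsinh (sinh (D / 2) * exp (- t)) /\
     (t <= D / 2 ->
        2 * arcsinh (sinh (D / 2) * exp (- t))
        <= D - 2 / D * (exp (- D) + D - 1) * t) /\
     (D / 2 < t ->
        2 * arcsinh (sinh (D / 2) * exp (- t)) <= 2 * sinh (D / 2) * exp (- t))).
Proof.
  intros Hcat ray1 ray2 Hasym Hbus.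
  pose proof (asymptotic_rays_dist_le X d g1 g2 Hcat ray1 ray2 rho Hasym Hbus) as Hdist.
  split; [exact Hdist |].
  intros -> HD t Ht D; split; [| split].
  - rewrite <- arccosh_diagonal_bound by (unfold D; lra).
    apply Hdist; assumption.
  - intros HtD; apply two_arcsinh_exp_le_linear; unfold D in *; lra.
  - intros _; rewrite Rmult_assoc; apply Rmult_le_compat_l; [lra |].
    apply arcsinh_le_id, Rmult_le_pos; [apply sinh_ge_0; unfold D; lra | left; apply exp_pos].
Qed.
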